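(* The exposure difference $ED$ satisfies boundedness, whereas none of the exposure metrics $ER$, $DTD$, $DTR$, $DID$, $DIR$ satisfies boundedness. Here a metric $m$ satisfies boundedness if there are $v_{\min},v_{\max}\in\mathbb R$ such that for every population $\mathcal D$, every candidate set $D\subseteq\mathcal D$ and every ranking $r$ of $D$, the value $m(r)$ is well-defined and $v_{\min}\le m(r)\le v_{\max}$.
   Context: A population is a finite set $\mathcal{D}$ of candidates partitioned into two nonempty groups, a non-protected group $G_0$ and a protected group $G_1$; each candidate $d$ has a relevance score $y(d)\in\mathbb R$. For a candidate set $D\subseteq\mathcal D$ with $n=|D|$, a ranking is a bijection $r:\{1,\dots,n\}\to D$ and $r^{-1}(d)$ is the position of $d$. Position bias $b(k)=1/\log_2(k+1)$. Exposure metrics: for $G\in\{G_0,G_1\}$, $\mathrm{Exposure}(G|r)=\frac{1}{|G|}\sum_{d\in G\cap D} b(r^{-1}(d))$, $Y(G)=\frac1{|G|}\sum_{d\in G}y(d)$, $CTR(G|r)=\frac1{|G|}\sum_{d\in G\cap D} b(r^{-1}(d))\,y(d)$ ($|G|$ is the group size in the whole population). $ED(r)=\mathrm{Exposure}(G_1|r)-\mathrm{Exposure}(G_0|r)$, $ER(r)=\mathrm{Exposure}(G_1|r)/\mathrm{Exposure}(G_0|r)$, $DTD(r)=\frac{\mathrm{Exposure}(G_1|r)}{Y(G_1)}-\frac{\mathrm{Exposure}(G_0|r)}{Y(G_0)}$, $DTR(r)=\frac{\mathrm{Exposure}(G_1|r)}{\mathrm{Exposure}(G_0|r)}\cdot\frac{Y(G_0)}{Y(G_1)}$,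 $DID(r)=\frac{CTR(G_1|r)}{Y(G_1)}-\frac{CTR(G_0|r)}{Y(G_0)}$, $DIR(r)=\frac{CTR(G_1|r)}{CTR(G_0|r)}\cdot\frac{Y(G_0)}{Y(G_1)}$. *)

From HB Require Import structures.
From mathcomp Require Import all_boot all_order all_algebra.
From mathcomp Require Import reals exp.
Set Implicit Arguments. Unset Strict Implicit. Unset Printing Implicit Defensive.
Import Order.TTheory GRing.Theory Num.Theory.
Local Open Scope ring_scope.

Section Metrics.
Variable R : realType.

Definition bias (k : nat) : R := 1 / (ln (k.+1%:R) / ln 2).

Variable T : finType.       (* the population \mathcal D = all of T *)
Variable grp : T -> bool.
Variable y : T -> R.

Definition G1 : {set T} := [set d | grp d].
Definition G0 : {set T} := [set d | ~~ grp d].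

(* A ranking of D is a duplicate-free list r enumerating D;
   the position r^{-1}(d) of d is (index d r).+1. *)
Definition pos (r : seq T) (d : T) : nat := (index d r).+1.

Definition Exposure (G : {set T}) (r : seq T) : R :=
  (\sum_(d in G | d \in r) bias (pos r d)) / #|G|%:R.
Definition Yavg (G : {set T}) : R := (\sum_(d in G) y d) / #|G|%:R.
Definition CTR (G : {set T}) (r : seq T) : R :=
  (\sum_(d in G | d \in r) bias (pos r d) * y d) / #|G|%:R.

(* metrics; [None] means "not well-defined" (division by zero) *)
Definition ED (r : seq T) : option R :=
  Some (Exposure G1 r - Exposure G0 r).
Definition ER (r : seq T) : option R :=
  if Exposure G0 r == 0 then None else Some (Exposure G1 r / Exposure G0 r).
Definition DTD (r : seq T) : option R :=
  if (Yavg G1 == 0) || (Yavg G0 == 0) then None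
  else Some (Exposure G1 r / Yavg G1 - Exposure G0 r / Yavg G0).
Definition DTR (r : seq T) : option R :=
  if (Exposure G0 r == 0) || (Yavg G1 == 0) then None
  else Some ((Exposure G1 r / Exposure G0 r) * (Yavg G0 / Yavg G1)).
Definition DID (r : seq T) : option R :=
  if (Yavg G1 == 0) || (Yavg G0 == 0) then None
  else Some (CTR G1 r / Yavg G1 - CTR G0 r / Yavg G0).
Definition DIR (r : seq T) : option R :=
  if (CTR G0 r == 0) || (Yavg G1 == 0) then None
  else Some ((CTR G1 r / CTR G0 r) * (Yavg G0 / Yavg G1)).

End Metrics.

Definition metric (R : realType) :=
  forall T : finType, (T -> bool) -> (T -> R) -> seq T -> option R.

Definition bounded (R : realType) (m : metric R) : Prop :=
  exists vmin vmax : R,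
    forall (T : finType) (grp : T -> bool) (y : T -> R),
      (exists d, grp d) -> (exists d, ~~ grp d) ->
      forall (D : {set T}) (r : seq T),
        uniq r -> (forall d, (d \in D) = (d \in r)) ->
        exists v, m T grp y r = Some v /\ vmin <= v <= vmax.

Definition mED (R : realType) : metric R := fun T grp y r => @ED R T grp r.
Definition mER (R : realType) : metric R := fun T grp y r => @ER R T grp r.
Definition mDTD (R : realType) : metric R := fun T grp y r => @DTD R T grp y r.
Definition mDTR (R : realType) : metric R := fun T grp y r => @DTR R T grp y r.
Definition mDID (R : realType) : metric R := fun T grp y r => @DID R T grp y r.
Definition mDIR (R : realType) : metric R := fun T grp y r => @DIR R T grp y r.

(* Position biases lie in [0, 1], so each group exposure, a sum of at most
   |G| biases divided by |G|, lies in [0, 1] and ED lies in [-1, 1].  The five other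
   metrics divide by an exposure, a click-through rate or an average score;
   for the empty ranking of a population with all scores 0 every such
   denominator vanishes, so none of them is even well-defined there. *)
From HB Require Import structures.
From mathcomp Require Import all_boot all_order all_algebra.
From mathcomp Require Import reals exp.
Import Order.TTheory GRing.Theory Num.Theory.
Local Open Scope ring_scope.

Section Bounds.
Variable R : realType.

Lemma bias_ge0 (k : nat) : 0 <= bias R k.
Proof. by rewrite /bias div1r invf_div divr_ge0 // ln_ge0 ?ler1n. Qed.

(* [bias 0] is [1 / (0 / ln 2)], which is 0 since [0^-1 = 0]. *)
Lemma bias_le1 (k : nat) : bias R k <= 1.
Proof.
rewrite /bias; case: k => [|k]; first by rewrite ln1 mul0r invr0 mulr0 ler01.
have ln2_gt0 : 0 < ln (2%:R : R) by rewrite ln_gt0 // ltr1n.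
have ln2_le : ln (2%:R : R) <= ln (k.+2%:R) by rewrite ler_ln ?posrE ?ltr0n // ler_nat.
rewrite div1r invf_div ler_pdivrMr ?mul1r //.
exact: lt_le_trans ln2_le.
Qed.

Variable T : finType.

Lemma Exposure_ge0 (G : {set T}) (r : seq T) : 0 <= Exposure R G r.
Proof. by rewrite divr_ge0 // sumr_ge0 // => d _; apply: bias_ge0. Qed.

Lemma Exposure_le1 (G : {set T}) (r : seq T) : Exposure R G r <= 1.
Proof.
rewrite /Exposure; have [->|G_neq0] := eqVneq #|G| 0%N; first by rewrite invr0 mulr0 ler01.
rewrite ler_pdivrMr ?ltr0n ?lt0n // mul1r -sumr_const big_mkcondr /=.
by apply: ler_sum => d _; case: (d \in r); rewrite ?bias_le1.
Qed.

Lemma Exposure_nil (G : {set T}) : Exposure R G [::] = 0.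
Proof. by rewrite /Exposure big_pred0 ?mul0r // => d; rewrite in_nil andbF. Qed.

Lemma CTR_nil (y : T -> R) (G : {set T}) : CTR y G [::] = 0.
Proof. by rewrite /CTR big_pred0 ?mul0r // => d; rewrite in_nil andbF. Qed.

Lemma Yavg0 (G : {set T}) : Yavg (fun _ => 0 : R) G = 0.
Proof. by rewrite /Yavg big1 ?mul0r. Qed.

End Bounds.

Lemma ED_bounded (R : realType) : bounded (@mED R).
Proof.
exists (-1), 1 => T grp y _ _ D r _ _.
eexists; split; first by [].
apply/andP; split; [rewrite -(sub0r 1) | rewrite -(subr0 1)];
  by apply: lerB; rewrite ?Exposure_ge0 ?Exposure_le1.
Qed.

Lemma undefined_not_bounded (R : realType) (m : metric R)
    (T : finType) (grp : T -> bool) (y : T -> R) (r : seq T) :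
  (exists d, grp d) -> (exists d, ~~ grp d) -> uniq r ->
  m T grp y r = None -> ~ bounded m.
Proof.
move=> G1_n0 G0_n0 r_uniq m_undef [vmin [vmax m_bounded]].
have [|v [m_def _]] := m_bounded T grp y G1_n0 G0_n0 [set d in r] r r_uniq.
  by move=> d; rewrite inE.
by rewrite m_undef in m_def.
Qed.

Theorem theorem3 (R : realType) :
  bounded (@mED R) /\ ~ bounded (@mER R) /\ ~ bounded (@mDTD R) /\
  ~ bounded (@mDTR R) /\ ~ bounded (@mDID R) /\ ~ bounded (@mDIR R).
Proof.
have undefined (m : metric R) : m bool id (fun _ => 0) [::] = None -> ~ bounded m.
  by apply: undefined_not_bounded; [exists true | exists false |].
split; first exact: ED_bounded.
split; first by apply: undefined; rewrite /mER /ER Exposure_nil eqxx.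
split; first by apply: undefined; rewrite /mDTD /DTD Yavg0 eqxx.
split; first by apply: undefined; rewrite /mDTR /DTR Exposure_nil eqxx.
split; first by apply: undefined; rewrite /mDID /DID Yavg0 eqxx.
by apply: undefined; rewrite /mDIR /DIR CTR_nil eqxx.
Qed.
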